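(* Let $\mathsf{F}(X)=X+(X\times X)$ and $\mathsf{B}=\mathcal{P}$ be the interaction and observation functors, and let $(X,f)$ be an $(\mathsf{F},\mathsf{B})$-dialgebra. An equivalence relation $\mathcal{R}\subseteq X\times X$ is the kernel $\{(x,y)\mid h(x)=h(y)\}$ of some homomorphism $h:(X,f)\to(Y,g)$ (for some $(\mathsf{F},\mathsf{B})$-dialgebra $(Y,g)$) if and only if for all $(x_1,x_2)\in\mathcal{R}$, $(y_1,y_2)\in\mathcal{R}$ and $z_1\in X$: (i) if $x_1\to z_1$ then there is $z_2$ with $x_2\to z_2$ and $(z_1,z_2)\in\mathcal{R}$; and (ii) if $(x_1,y_1)\to z_1$ then there is $z_2$ with $(x_2,y_2)\to z_2$ and $(z_1,z_2)\in\mathcal{R}$. As a corollary, the kernel of the canonical map of the bisimilarity quotient of $(X,f)$ (i.e. dialgebraic bisimilarity $\sim_f$) is the largest equivalence relation satisfying (i) and (ii).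
   Context: For functors $\mathsf{F},\mathsf{B}:\mathbf{Set}\to\mathbf{Set}$, an $(\mathsf{F},\mathsf{B})$-dialgebra is a pair $(X,f)$ with $X$ a set and $f:\mathsf{F}X\to\mathsf{B}X$ a function; a homomorphism $h:(X,f)\to(Y,g)$ is a function $h:X\to Y$ with $g\circ\mathsf{F}h=\mathsf{B}h\circ f$. The interaction functor is $\mathsf{F}(X)=X+(X\times X)$ with $\mathsf{F}h(x)=h(x)$ and $\mathsf{F}h(x,y)=(h(x),h(y))$; the observation functor is $\mathsf{B}(X)=\mathcal{P}(X)$ with $\mathsf{B}h(S)=h[S]$. Elements of $X$ and of $X\times X$ are regarded as elements of $\mathsf{F}X$ without coproduct tags. Notation: $x\to z$ means $z\in f(x)$, and $(x,y)\to z$ means $z\in f(x,y)$. Dialgebraic bisimilarity: $x\sim_f y$ iff some homomorphism out of $(X,f)$ identifies $x$ and $y$. The bisimilarity quotient of $(X,f)$ is the wide pushout in $\mathit{Dialg}(\mathsf{F},\mathsf{B})$ of all quotients (epimorphisms modulo isomorphism) of $(X,f)$, with canonical map the induced morphism out of $(X,f)$. *)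

From Stdlib Require Import RelationClasses.

Definition FF (X : Type) : Type := (X + (X * X))%type.

Definition Fmap {X Y : Type} (h : X -> Y) (u : FF X) : FF Y :=
  match u with
  | inl x => inl (h x)
  | inr (x, y) => inr (h x, h y)
  end.

(* Observation functor B(X) = P(X), subsets as predicates X -> Prop.
   An (F,B)-dialgebra on X is a map f : FF X -> (X -> Prop). *)
Definition dialg (X : Type) : Type := FF X -> X -> Prop.

(* Homomorphism condition g o F h = B h o f, with B h (S) = h[S];
   equality of subsets written out pointwise. *)
Definition is_hom {X Y : Type} (f : dialg X) (g : dialg Y) (h : X -> Y) : Prop :=
  forall (u : FF X) (z : Y), g (Fmap h u) z <-> (exists w, f u w /\ h w = z).

Definition kernel {X Y : Type} (h : X -> Y) (x y : X) : Prop := h x = h y.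

(* Conditions (i) and (ii). x -> z means f (inl x) z; (x,y) -> z means f (inr (x,y)) z. *)
Definition cond_i {X : Type} (f : dialg X) (R : X -> X -> Prop) : Prop :=
  forall x1 x2 z1, R x1 x2 -> f (inl x1) z1 -> exists z2, f (inl x2) z2 /\ R z1 z2.

Definition cond_ii {X : Type} (f : dialg X) (R : X -> X -> Prop) : Prop :=
  forall x1 x2 y1 y2 z1, R x1 x2 -> R y1 y2 -> f (inr (x1, y1)) z1 ->
    exists z2, f (inr (x2, y2)) z2 /\ R z1 z2.

Definition bisim {X : Type} (f : dialg X) (x y : X) : Prop :=
  exists (Y : Type) (g : dialg Y) (h : X -> Y), is_hom f g h /\ h x = h y.

(* A homomorphism [h] reflects every transition of [f] up to [kernel h], which gives (i) and
   (ii); conversely, if an equivalence [R] satisfies (i) and (ii), the map sending [x] to its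
   [R]-class is a homomorphism onto the direct image of [f], with kernel [R].
   For the corollary, each kernel is a simulation for the one-sided transition systems
   [x -> z], [(x, y) -> z] (fixed [y]) and [(x, y) -> z] (fixed [x]); simulations are closed
   under unions and transitive closure, so the transitive closure of [bisim f] is an
   equivalence satisfying (i) and (ii), hence a kernel, hence contained in [bisim f]. *)
From Stdlib Require Import Relations RelationClasses.
From Stdlib Require Import FunctionalExtensionality PropExtensionality.

Set Implicit Arguments.

Section Simulation.

Variables (X : Type) (step : X -> X -> Prop).

Definition simulation (R : X -> X -> Prop) : Prop :=
  forall x1 x2 z1, R x1 x2 -> step x1 z1 -> exists z2, step x2 z2 /\ R z1 z2.

Lemma simulation_union (S : X -> X -> Prop) :
  (forall x1 x2, S x1 x2 ->
     exists R, simulation R /\ (forall a b, R a b -> S a b) /\ R x1 x2) ->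
  simulation S.
Proof.
  intros cover x1 x2 z1 Sx Hstep.
  destruct (cover x1 x2 Sx) as [R [simR [subRS Rx]]].
  destruct (simR x1 x2 z1 Rx Hstep) as [z2 [Hstep2 Rz]].
  exists z2; split; auto.
Qed.

Lemma simulation_clos_trans (R : X -> X -> Prop) :
  simulation R -> simulation (clos_trans X R).
Proof.
  intros simR x1 x2 z1 Rx; revert z1.
  induction Rx as [x1 x2 Rx | x1 x2 x3 _ IH12 _ IH23]; intros z1 Hstep.
  - destruct (simR x1 x2 z1 Rx Hstep) as [z2 [Hstep2 Rz]].
    exists z2; split; [exact Hstep2 | now apply t_step].
  - destruct (IH12 z1 Hstep) as [z2 [Hstep2 Rz12]].
    destruct (IH23 z2 Hstep2) as [z3 [Hstep3 Rz23]].
    exists z3; split; [exact Hstep3 | now apply t_trans with z2].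
Qed.

End Simulation.

Lemma clos_trans_symmetric (X : Type) (R : X -> X -> Prop) :
  Symmetric R -> Symmetric (clos_trans X R).
Proof.
  intros symR x y Rxy.
  induction Rxy as [x y Rxy | x y z _ IHxy _ IHyz].
  - now apply t_step, symR.
  - now apply t_trans with y.
Qed.

Lemma clos_trans_equivalence (X : Type) (R : X -> X -> Prop) :
  Reflexive R -> Symmetric R -> Equivalence (clos_trans X R).
Proof.
  intros reflR symR; split.
  - intro x; now apply t_step.
  - now apply clos_trans_symmetric.
  - intros x y z; apply t_trans.
Qed.

Section Conditions.

Variables (X : Type) (f : dialg X).

Lemma cond_i_simulation (R : X -> X -> Prop) :
  cond_i f R <-> simulation (fun x => f (inl x)) R.
Proof. reflexivity. Qed.

Lemma cond_ii_simulation (R : X -> X -> Prop) :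
  Reflexive R -> cond_ii f R ->
  (forall y, simulation (fun x => f (inr (x, y))) R) /\
  (forall x, simulation (fun y => f (inr (x, y))) R).
Proof.
  intros reflR condR; split.
  - intros y x1 x2 z1 Rx; now apply condR.
  - intros x y1 y2 z1 Ry; now apply condR.
Qed.

Lemma simulation_cond_ii (R : X -> X -> Prop) :
  Transitive R ->
  (forall y, simulation (fun x => f (inr (x, y))) R) ->
  (forall x, simulation (fun y => f (inr (x, y))) R) ->
  cond_ii f R.
Proof.
  intros transR simL simR x1 x2 y1 y2 z1 Rx Ry Hstep.
  destruct (simL y1 x1 x2 z1 Rx Hstep) as [z2 [Hstep2 Rz12]].
  destruct (simR x2 y1 y2 z2 Ry Hstep2) as [z3 [Hstep3 Rz23]].
  exists z3; split; [exact Hstep3 | now apply transR with z2].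
Qed.

End Conditions.

Lemma Fmap_id (X : Type) (u : FF X) : Fmap (fun x => x) u = u.
Proof. now destruct u as [x | [x y]]. Qed.

Lemma is_hom_id (X : Type) (f : dialg X) : is_hom f f (fun x => x).
Proof.
  intros u z; rewrite Fmap_id; split.
  - intros Hz; exists z; split; auto.
  - now intros [w [Hw <-]].
Qed.

Section Kernels.

Variables (X Y : Type) (f : dialg X) (h : X -> Y) (R : X -> X -> Prop).
Hypothesis R_kernel : forall x y, R x y <-> kernel h x y.

Lemma kernel_equivalence : Equivalence R.
Proof.
  split.
  - intro x; now apply R_kernel.
  - intros x y Rxy; apply R_kernel; symmetry; now apply R_kernel.
  - intros x y z Rxy Ryz; apply R_kernel.
    now transitivity (h y); apply R_kernel.
Qed.

Section Homomorphism.

Variables (g : dialg Y).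
Hypothesis h_hom : is_hom f g h.

Lemma hom_transition_transfer (u u' : FF X) (z1 : X) :
  Fmap h u = Fmap h u' -> f u z1 -> exists z2, f u' z2 /\ R z1 z2.
Proof.
  intros same_image Hstep.
  assert (G : g (Fmap h u') (h z1)) by (rewrite <- same_image; apply h_hom; eauto).
  apply h_hom in G as [z2 [Hstep2 Hz]].
  exists z2; split; [exact Hstep2 | now apply R_kernel].
Qed.

Lemma hom_kernel_cond_i : cond_i f R.
Proof.
  intros x1 x2 z1 Rx; apply hom_transition_transfer; simpl.
  now rewrite (proj1 (R_kernel x1 x2) Rx).
Qed.

Lemma hom_kernel_cond_ii : cond_ii f R.
Proof.
  intros x1 x2 y1 y2 z1 Rx Ry; apply hom_transition_transfer; simpl.
  now rewrite (proj1 (R_kernel x1 x2) Rx), (proj1 (R_kernel y1 y2) Ry).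
Qed.

End Homomorphism.

Definition image_dialg : dialg Y :=
  fun v c => exists u, Fmap h u = v /\ exists w, f u w /\ h w = c.

Lemma image_dialg_hom : cond_i f R -> cond_ii f R -> is_hom f image_dialg h.
Proof.
  intros condi condii u z; split.
  - intros [u' [same_image [w [Hstep Hw]]]].
    assert (T : exists w', f u w' /\ R w w').
    { destruct u as [a | [a1 a2]], u' as [b | [b1 b2]];
        simpl in same_image; try discriminate.
      - injection same_image as hb.
        apply (condi b a w); [now apply R_kernel | exact Hstep].
      - injection same_image as hb1 hb2.
        apply (condii b1 a1 b2 a2 w); [now apply R_kernel .. | exact Hstep]. }
    destruct T as [w' [Hstep' Rw]].
    exists w'; split; [exact Hstep' |].
    rewrite <- Hw; symmetry; now apply R_kernel.
  - intros [w [Hstep Hw]]; exists u; split; [reflexivity | eauto].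
Qed.

End Kernels.

Lemma equivalence_kernel_class (X : Type) (R : X -> X -> Prop) :
  Equivalence R -> forall x y, R x y <-> kernel (fun x z => R x z) x y.
Proof.
  intros eqR x y; unfold kernel; split.
  - intros Rxy; apply functional_extensionality; intro z.
    apply propositional_extensionality; split; intro Rz.
    + now transitivity x; [symmetry |].
    + now transitivity y.
  - intros classes; rewrite (equal_f classes y); reflexivity.
Qed.

Lemma kernel_iff_conditions (X : Type) (f : dialg X) (R : X -> X -> Prop) :
  Equivalence R ->
  (exists (Y : Type) (g : dialg Y) (h : X -> Y),
     is_hom f g h /\ (forall x y, R x y <-> kernel h x y))
  <-> (cond_i f R /\ cond_ii f R).
Proof.
  intros eqR; split.
  - intros [Y [g [h [h_hom R_kernel]]]]; split.
    + exact (hom_kernel_cond_i _ R_kernel h_hom).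
    + exact (hom_kernel_cond_ii _ R_kernel h_hom).
  - intros [condi condii].
    pose proof (equivalence_kernel_class eqR) as R_kernel.
    exists (X -> Prop), (image_dialg f (fun x z => R x z)), (fun x z => R x z).
    split; [exact (image_dialg_hom R_kernel condi condii) | exact R_kernel].
Qed.

Section Bisimilarity.

Variables (X : Type) (f : dialg X).

Lemma conditions_bisim (R : X -> X -> Prop) :
  Equivalence R -> cond_i f R -> cond_ii f R -> forall x y, R x y -> bisim f x y.
Proof.
  intros eqR condi condii x y Rxy.
  destruct (proj2 (kernel_iff_conditions f eqR) (conj condi condii))
    as [Y [g [h [h_hom R_kernel]]]].
  exists Y, g, h; split; [exact h_hom | now apply R_kernel].
Qed.

Lemma bisim_covered_by_kernels (P : (X -> X -> Prop) -> Prop) :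
  (forall R, Equivalence R -> cond_i f R -> cond_ii f R -> P R) ->
  forall x1 x2, bisim f x1 x2 ->
    exists R, P R /\ (forall a b, R a b -> bisim f a b) /\ R x1 x2.
Proof.
  intros P_of_conditions x1 x2 [Y [g [h [h_hom hx]]]].
  pose proof (fun a b => iff_refl (kernel h a b)) as kernel_refl.
  pose proof (kernel_equivalence _ kernel_refl) as eq_kernel.
  exists (kernel h); repeat split; [| | exact hx].
  - apply P_of_conditions; [exact eq_kernel | |].
    + exact (hom_kernel_cond_i _ kernel_refl h_hom).
    + exact (hom_kernel_cond_ii _ kernel_refl h_hom).
  - intros a b hab; exists Y, g, h; split; assumption.
Qed.

Lemma bisim_refl : Reflexive (bisim f).
Proof. intro x; exists X, f, (fun x => x); split; [apply is_hom_id | reflexivity]. Qed.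

Lemma bisim_sym : Symmetric (bisim f).
Proof. intros x y [Y [g [h [h_hom hxy]]]]; exists Y, g, h; split; auto. Qed.

Lemma clos_trans_bisim_conditions :
  cond_i f (clos_trans X (bisim f)) /\ cond_ii f (clos_trans X (bisim f)).
Proof.
  pose proof (clos_trans_equivalence bisim_refl bisim_sym) as eqT.
  split.
  - apply cond_i_simulation, simulation_clos_trans, simulation_union,
      bisim_covered_by_kernels.
    intros R _ condi _; exact condi.
  - apply simulation_cond_ii; [apply eqT | intro y | intro x];
      apply simulation_clos_trans, simulation_union, bisim_covered_by_kernels;
      intros R eqR _ condii;
      destruct (cond_ii_simulation (@Equivalence_Reflexive _ _ eqR) condii); auto.
Qed.

Lemma bisim_kernel :
  exists (Y : Type) (g : dialg Y) (h : X -> Y),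
    is_hom f g h /\ (forall x y, bisim f x y <-> kernel h x y).
Proof.
  pose proof (clos_trans_equivalence bisim_refl bisim_sym) as eqT.
  destruct clos_trans_bisim_conditions as [condi condii].
  destruct (proj2 (kernel_iff_conditions f eqT) (conj condi condii))
    as [Y [g [h [h_hom T_kernel]]]].
  exists Y, g, h; split; [exact h_hom |]; intros x y; rewrite <- T_kernel; split.
  - apply t_step.
  - exact (conditions_bisim eqT condi condii x y).
Qed.

End Bisimilarity.

Theorem theorem1 (X : Type) (f : dialg X) :
  (forall R : X -> X -> Prop, Equivalence R ->
     ((exists (Y : Type) (g : dialg Y) (h : X -> Y),
          is_hom f g h /\ (forall x y, R x y <-> kernel h x y))
      <-> (cond_i f R /\ cond_ii f R)))
  /\
  (Equivalence (bisim f) /\ cond_i f (bisim f) /\ cond_ii f (bisim f) /\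
   forall R : X -> X -> Prop, Equivalence R -> cond_i f R -> cond_ii f R ->
     forall x y, R x y -> bisim f x y).
Proof.
  split; [intros R; apply kernel_iff_conditions |].
  destruct (bisim_kernel f) as [Y [g [h [h_hom bisim_iff_kernel]]]].
  split; [exact (kernel_equivalence _ bisim_iff_kernel) |].
  split; [exact (hom_kernel_cond_i _ bisim_iff_kernel h_hom) |].
  split; [exact (hom_kernel_cond_ii _ bisim_iff_kernel h_hom) |].
  exact (@conditions_bisim X f).
Qed.
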